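(* In the two-tier residency matching game described in the context with list length $K=1$ and $v\ge e/(e-1)$, under the large market approximation, the social welfare of the (symmetric) Nash equilibrium is at least a $\frac{e}{2(e-1)}$ fraction (note $\frac{e}{2(e-1)}>0.79$) of the social welfare of SIMPLE.
   Context: Model: there are $n$ high-tier and $rn$ low-tier doctors ($r>0$), and $n$ high-tier and $rn$ low-tier hospitals, each with one position. Every hospital prefers every high doctor to every low doctor and every doctor prefers every high hospital to every low hospital; within a tier, preferences are independent uniformly random permutations. Each doctor submits a ranked list of exactly $K$ hospitals (his top choices within the tiers he chooses); hospitals submit full true rankings; doctor-proposing deferred acceptance is run. Values: a doctor gets $v>1$ if matched to a high hospital, $1$ if matched to a low one, $0$ if unmatched; a hospital gets $v$ if matched to a high doctor, $1$ if matched to a low doctor, $0$ if unfilled. Social welfare is the sum of the values of all doctors and hospitals. Large market approximation: $n\to\infty$ with $r,K,v$ fixed, and each application to a hospital is accepted independently with a probability determined by the aggregate strategy profile through fixed-point equations (expected matched doctors = expected hospitals receiving at least one admissible application; a hospital receiving on average $\lambda$ applications gets none with probability $e^{-\lambda}$; low doctors' applications to hospitals already taken by high doctors are rejected). Equilibrium: symmetric Nash equilibrium, all doctors of a tier using the same (possibly mixed) strategy, each maximizing expected value given the acceptance probabilities. SIMPLE: the outcome when every doctor submits a single application ($K=1$) to his most preferred hospital in his own tier; its welfare in the large market limit is $2(v+r)n(1-1/e)$. *)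

From Stdlib Require Import Reals.
Open Scope R_scope.

(* Large-market model, list length K = 1.
   All masses are normalized by n (number of high doctors = number of high
   hospitals); there are r*n low doctors and r*n low hospitals.

   With K = 1, a (mixed) symmetric strategy of a tier is the probability of
   sending the single application to the top HIGH hospital (otherwise the
   application goes to the top LOW hospital).  p = high doctors' probability,
   q = low doctors' probability. *)

(* Acceptance ratio: if the applications to a set of hospitals arrive at
   Poisson rate lam per hospital, the fraction of hospitals receiving at
   least one is 1 - e^{-lam}; equating matched doctors with such hospitals,
   each application is accepted with probability (1 - e^{-lam})/lam
   (limit value 1 when lam = 0). *)
Definition acc (lam : R) : R :=
  if Req_EM_T lam 0 then 1 else (1 - exp (- lam)) / lam.

(* High hospitals: high-doctor application rate p per hospital.
   Low doctors' applications to high hospitals (rate r*q per hospital) are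
   admissible only at high hospitals receiving no high application
   (probability e^{-p}).
   Low hospitals (r*n of them): high-doctor rate (1-p)/r, low-doctor rate
   1-q, the latter admissible only where there is no high applicant. *)
Definition aHH (r p q : R) : R := acc p.
Definition aLH (r p q : R) : R := exp (- p) * acc (r * q).
Definition aHL (r p q : R) : R := acc ((1 - p) / r).
Definition aLL (r p q : R) : R := exp (- ((1 - p) / r)) * acc (1 - q).

Definition payoff_high (v r p q : R) (x : R) : R :=
  x * (v * aHH r p q) + (1 - x) * aHL r p q.
Definition payoff_low (v r p q : R) (x : R) : R :=
  x * (v * aLH r p q) + (1 - x) * aLL r p q.

Definition is_equilibrium (v r p q : R) : Prop :=
  0 <= p <= 1 /\ 0 <= q <= 1 /\
  (forall x, 0 <= x <= 1 -> payoff_high v r p q x <= payoff_high v r p q p) /\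
  (forall y, 0 <= y <= 1 -> payoff_low v r p q y <= payoff_low v r p q q).

(* Masses (per n) of matched pairs: doctor tier / hospital tier. *)
Definition mHH (r p q : R) : R := p * aHH r p q.
Definition mHL (r p q : R) : R := (1 - p) * aHL r p q.
Definition mLH (r p q : R) : R := r * q * aLH r p q.
Definition mLL (r p q : R) : R := r * (1 - q) * aLL r p q.

Definition welfare (v r p q : R) : R :=
  (* doctors *)
  (v * (mHH r p q + mLH r p q) + (mHL r p q + mLL r p q)) +
  (* hospitals *)
  (v * (mHH r p q + mHL r p q) + (mLH r p q + mLL r p q)).

Definition welfare_simple (v r : R) : R := 2 * (v + r) * (1 - 1 / exp 1).

(* Because v (1 - 1/e) >= 1 and a lone application to a high hospital is
   accepted with probability acc p >= 1 - 1/e, every high doctor applies high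
   in equilibrium (p = 1), and the high tier contributes 2 v (1 - 1/e) >= v.
   A low doctor applies high only if v e^{-1} acc (r q) >= acc (1 - q), so the
   low tier contributes at least r q acc s + 2 r (1 - q) acc s = r acc s (1 + s)
   with s = 1 - q, and acc s (1 + s) >= 1 is e^s >= 1 + s.  The total v + r is
   e / (2 (e - 1)) times the welfare of SIMPLE. *)

From Stdlib Require Import Reals Lra.
Open Scope R_scope.

Lemma exp_convex (a b t : R) :
  0 <= t <= 1 -> exp (t * a + (1 - t) * b) <= t * exp a + (1 - t) * exp b.
Proof.
  intros Ht.
  set (m := t * a + (1 - t) * b).
  assert (tangent : forall y, exp m * (1 + (y - m)) <= exp y).
  { intro y. replace y with (m + (y - m)) at 2 by ring.
    rewrite exp_plus. pose proof (exp_pos m).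
    apply Rmult_le_compat_l; [lra | apply exp_ineq1_le]. }
  pose proof (tangent a) as Ha. pose proof (tangent b) as Hb.
  assert (t * (exp m * (1 + (a - m))) + (1 - t) * (exp m * (1 + (b - m))) = exp m)
    by (unfold m; ring).
  nra.
Qed.

Lemma exp_m1_le_half : exp (-1) <= 1 / 2.
Proof.
  replace (-1) with (- (1)) by ring. rewrite exp_Ropp. pose proof (exp_ineq1_le 1).
  apply Rmult_le_reg_r with (exp 1); [lra|].
  rewrite Rinv_l by lra. lra.
Qed.

Lemma acc_mul_self (x : R) : acc x * x = 1 - exp (- x).
Proof.
  unfold acc; destruct (Req_EM_T x 0) as [->|Hx].
  - rewrite Ropp_0, exp_0; ring.
  - field; exact Hx.
Qed.

Lemma acc_0 : acc 0 = 1.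
Proof. unfold acc; destruct (Req_EM_T 0 0); [reflexivity | contradiction]. Qed.

Lemma acc_1 : acc 1 = 1 - exp (-1).
Proof.
  rewrite <- (Rmult_1_r (acc 1)), acc_mul_self.
  f_equal; f_equal; ring.
Qed.

Lemma acc_gt0 (x : R) : 0 < acc x.
Proof.
  destruct (Req_dec x 0) as [->|Hx].
  { rewrite acc_0; lra. }
  pose proof (acc_mul_self x) as Hax.
  assert (Hsign : 0 < (1 - exp (- x)) * x).
  { destruct (Rlt_or_le 0 x) as [Hpos|Hneg].
    - assert (exp (- x) < exp 0) by (apply exp_increasing; lra).
      rewrite exp_0 in *; nra.
    - assert (exp 0 < exp (- x)) by (apply exp_increasing; lra).
      rewrite exp_0 in *; nra. }
  nra.
Qed.

Lemma acc_lt1 (x : R) : 0 < x -> acc x < 1.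
Proof.
  intros Hx. pose proof (acc_mul_self x). pose proof (exp_ineq1 (- x)).
  apply Rmult_lt_reg_r with x; lra.
Qed.

Lemma acc_ge_1_exp_m1 (x : R) : 0 <= x <= 1 -> 1 - exp (-1) <= acc x.
Proof.
  intros Hx. destruct (Req_dec x 0) as [->|Hx0].
  { rewrite acc_0; pose proof (exp_pos (-1)); lra. }
  pose proof (exp_convex (-1) 0 x Hx) as Hconv.
  rewrite exp_0 in Hconv. replace (x * -1 + (1 - x) * 0) with (- x) in Hconv by ring.
  pose proof (acc_mul_self x).
  apply Rmult_le_reg_r with x; lra.
Qed.

Lemma acc_mul_1_plus_ge1 (s : R) : 0 <= s -> 1 <= acc s * (1 + s).
Proof.
  intros Hs. destruct (Req_dec s 0) as [->|Hs0].
  { rewrite acc_0; lra. }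
  pose proof (acc_mul_self s) as Has.
  assert (Hexp : exp (- s) * (1 + s) <= 1).
  { rewrite exp_Ropp. pose proof (exp_ineq1_le s). pose proof (exp_pos s).
    apply Rmult_le_reg_r with (exp s); [lra|].
    replace (/ exp s * (1 + s) * exp s) with (1 + s) by (field; lra). lra. }
  apply Rmult_le_reg_r with s; nra.
Qed.

Lemma mixed_best_response_lt1 (A B p : R) :
  (forall x, 0 <= x <= 1 -> x * A + (1 - x) * B <= p * A + (1 - p) * B) ->
  p < 1 -> A <= B.
Proof. intros Hbr Hp. specialize (Hbr 1 ltac:(lra)). nra. Qed.

Lemma mixed_best_response_gt0 (A B p : R) :
  (forall x, 0 <= x <= 1 -> x * A + (1 - x) * B <= p * A + (1 - p) * B) ->
  0 < p -> B <= A.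
Proof. intros Hbr Hp. specialize (Hbr 0 ltac:(lra)). nra. Qed.

Lemma threshold_mul_1_exp_m1_ge1 (v : R) :
  exp 1 / (exp 1 - 1) <= v -> 1 <= v * (1 - exp (-1)).
Proof.
  intros Hv. pose proof (exp_ineq1_le 1).
  replace (-1) with (- (1)) by ring. rewrite exp_Ropp.
  apply Rmult_le_reg_r with (/ (exp 1 - 1)); [apply Rinv_0_lt_compat; lra|].
  replace (v * (1 - / exp 1) * / (exp 1 - 1)) with (v / exp 1) by (field; lra).
  apply Rmult_le_reg_r with (exp 1); [lra|].
  replace (v / exp 1 * exp 1) with v by (field; lra).
  unfold Rdiv in Hv; lra.
Qed.

Lemma equilibrium_high_apply_high (v r p q : R) :
  0 < r -> 1 <= v * (1 - exp (-1)) -> is_equilibrium v r p q -> p = 1.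
Proof.
  intros Hr Hv [Hp [_ [Hhigh _]]].
  destruct (Req_dec p 1) as [|Hp1]; [assumption | exfalso].
  assert (Hle : v * acc p <= acc ((1 - p) / r)).
  { apply (mixed_best_response_lt1 _ _ p Hhigh); lra. }
  assert (acc ((1 - p) / r) < 1) by (apply acc_lt1, Rdiv_lt_0_compat; lra).
  pose proof exp_m1_le_half.
  assert (0 < v) by nra.
  assert (v * (1 - exp (-1)) <= v * acc p)
    by (apply Rmult_le_compat_l; [lra | exact (acc_ge_1_exp_m1 p Hp)]).
  lra.
Qed.

Lemma welfare_all_high (v r q : R) :
  welfare v r 1 q =
  2 * v * (1 - exp (-1)) + (v + 1) * mLH r 1 q + 2 * (r * (1 - q) * acc (1 - q)).
Proof.
  unfold welfare, mHH, mHL, mLL, aHH, aHL, aLL.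
  rewrite Rminus_diag, Rdiv_0_l, Ropp_0, exp_0.
  rewrite acc_1; ring.
Qed.

Lemma equilibrium_low_tier_welfare_ge (v r q : R) :
  0 < r -> is_equilibrium v r 1 q ->
  r <= (v + 1) * mLH r 1 q + 2 * (r * (1 - q) * acc (1 - q)).
Proof.
  intros Hr [_ [Hq [_ Hlow]]].
  set (a := acc (1 - q)). set (b := acc (r * q)).
  assert (Hlow_pays : q * a <= q * (v * (exp (-1) * b))).
  { destruct (Req_dec q 0) as [->|Hq0]; [lra|].
    apply Rmult_le_compat_l; [lra|].
    apply (mixed_best_response_gt0 _ _ q); [|lra].
    unfold payoff_low, aLH, aLL in Hlow.
    rewrite Rminus_diag, Rdiv_0_l, Ropp_0, exp_0, Rmult_1_l in Hlow.
    exact Hlow. }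
  assert (Hab : 0 < exp (-1) * b) by (apply Rmult_lt_0_compat; [apply exp_pos | apply acc_gt0]).
  assert (Ha : 1 <= a * (1 + (1 - q))) by (apply acc_mul_1_plus_ge1; lra).
  assert (r * (q * a) <= r * (q * (v * (exp (-1) * b))))
    by (apply Rmult_le_compat_l; lra).
  assert (r * 1 <= r * (a * (1 + (1 - q)))) by (apply Rmult_le_compat_l; lra).
  assert (0 <= r * q * (exp (-1) * b)) by (apply Rmult_le_pos; nra).
  unfold mLH, aLH; fold b.
  (* [aLH r 1 q] unfolds to [exp (- (1))], which [lra] does not identify with the literal [-1]. *)
  replace (- (1)) with (-1) by ring.
  lra.
Qed.

Lemma welfare_simple_scaled (v r : R) :
  exp 1 / (2 * (exp 1 - 1)) * welfare_simple v r = v + r.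
Proof.
  unfold welfare_simple. pose proof (exp_ineq1_le 1).
  field. lra.
Qed.

Theorem proposition2 (v r p q : R) :
  1 < v -> 0 < r -> exp 1 / (exp 1 - 1) <= v ->
  is_equilibrium v r p q ->
  exp 1 / (2 * (exp 1 - 1)) * welfare_simple v r <= welfare v r p q.
Proof.
  intros Hv Hr Hve Heq.
  assert (p = 1) as ->
    by exact (equilibrium_high_apply_high v r p q Hr (threshold_mul_1_exp_m1_ge1 v Hve) Heq).
  rewrite welfare_simple_scaled, welfare_all_high.
  pose proof (equilibrium_low_tier_welfare_ge v r q Hr Heq).
  pose proof exp_m1_le_half.
  nra.
Qed.
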